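(* For every integer $n\ge 3$, $|\mathfrak D^1_{2n}(123)|=4$.
   Context: A Dumont permutation of the first kind of length $2n$ is a permutation $\pi\in\mathfrak S_{2n}$ such that for every $i=1,\dots,2n$: if $\pi(i)$ is even then $i<2n$ and $\pi(i)>\pi(i+1)$; if $\pi(i)$ is odd then $i=2n$ or $\pi(i)<\pi(i+1)$. $\mathfrak D^1_{2n}$ denotes the set of these. A permutation $\sigma$ contains a pattern $\tau\in\mathfrak S_k$ if some subsequence $(\sigma(i_1),\dots,\sigma(i_k))$, $i_1<\dots<i_k$, is order-isomorphic to $\tau$; otherwise $\sigma$ avoids $\tau$. $\mathfrak D^1_{2n}(T)$ denotes the set of permutations in $\mathfrak D^1_{2n}$ avoiding every pattern in $T$. *)

(* Permutations of {1..N} are modelled as s : 'S_N acting on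
   'I_N = {0..N-1}; the value pi(i) (1-based) is (s i).+1. *)
From mathcomp Require Import all_boot all_order all_fingroup.
Set Implicit Arguments. Unset Strict Implicit. Unset Printing Implicit Defensive.

Definition word (N : nat) (s : 'S_N) : seq nat := [seq (s i).+1 | i <- enum 'I_N].

Definition dumont1 (N : nat) (s : 'S_N) : bool :=
  let w := nth 0 (word s) in
  [forall i : 'I_N,
     if ~~ odd (w i) then (i.+1 < N) && (w i.+1 < w i)
     else (i.+1 == N) || (w i < w i.+1)].

Definition contains (N k : nat) (s : 'S_N) (t : 'S_k) : bool :=
  [exists f : {ffun 'I_k -> 'I_N},
     [forall i : 'I_k, forall j : 'I_k, (i < j) ==> (f i < f j)] &&
     [forall i : 'I_k, forall j : 'I_k, (s (f i) < s (f j)) == (t i < t j)]].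

Definition avoids (N k : nat) (s : 'S_N) (t : 'S_k) : bool := ~~ contains s t.

Definition pat123 : 'S_3 := 1%g.

Definition D1_avoid123 (n : nat) : {set 'S_(2 * n)} :=
  [set s : 'S_(2 * n) | dumont1 s && avoids s pat123].

From mathcomp Require Import all_boot all_order all_fingroup.
From mathcomp Require Import zify.
Set Implicit Arguments. Unset Strict Implicit. Unset Printing Implicit Defensive.

(* For even M >= 6, every 123-avoiding Dumont permutation of length M + 2
   starts with M + 1, M + 2.  Indeed M + 1 is odd, so it is either last or
   followed by M + 2; in the latter case anything before it would start a 123.
   If M + 1 were last, each odd value v < M + 1 not in position M would be
   followed by a larger entry, which must be M + 2 (otherwise v, that entry,
   M + 1 is a 123); so the three values 1, 3, 5 would fit into the two slots
   "position M" and "just before M + 2".  Conversely prepending M + 1, M + 2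
   preserves both properties, so the count is the same for all 2n >= 6, and
   it is 4 for 2n = 6 by enumeration. *)

Definition dumont_at (w : seq nat) (i : nat) : bool :=
  if ~~ odd (nth 0 w i) then (i.+1 < size w) && (nth 0 w i.+1 < nth 0 w i)
  else (i.+1 == size w) || (nth 0 w i < nth 0 w i.+1).

Definition dumont_word (w : seq nat) : bool := all (dumont_at w) (iota 0 (size w)).

Definition has123 (w : seq nat) : bool :=
  let I := iota 0 (size w) in
  has (fun i => has (fun j => has (fun k =>
    [&& i < j, j < k, nth 0 w i < nth 0 w j & nth 0 w j < nth 0 w k]) I) I) I.

Definition dumont123 (w : seq nat) : bool := dumont_word w && ~~ has123 w.

Definition dumont123_words (N : nat) : seq (seq nat) :=
  [seq w <- permutations (iota 1 N) | dumont123 w].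

Lemma dumont_wordP w :
  reflect (forall i, i < size w -> dumont_at w i) (dumont_word w).
Proof.
apply: (iffP allP) => dw i; first by move=> lt_i; apply: dw; rewrite mem_iota.
by rewrite mem_iota => /andP[_ lt_i]; apply: dw.
Qed.

Lemma dumont_word_cons x w :
  dumont_word (x :: w) = dumont_at (x :: w) 0 && dumont_word w.
Proof. by rewrite /dumont_word /= -add1n iotaDl all_map. Qed.

Lemma has123P w :
  reflect (exists i j k, [/\ i < j, j < k, k < size w,
             nth 0 w i < nth 0 w j & nth 0 w j < nth 0 w k])
          (has123 w).
Proof.
apply: (iffP idP).
- case/hasP => i _ /hasP[j _ /hasP[k]].
  by rewrite mem_iota => /andP[_ lt_k] /and4P[ij jk wij wjk]; exists i, j, k.
- case=> i [j [k [ij jk lt_k wij wjk]]].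
  apply/hasP; exists i; first by rewrite mem_iota; lia.
  apply/hasP; exists j; first by rewrite mem_iota; lia.
  by apply/hasP; exists k; rewrite ?mem_iota ?ij ?jk ?wij ?wjk //; lia.
Qed.

Lemma dumont_word_cons2 a b w : odd a -> ~~ odd b -> a < b ->
  0 < size w -> nth 0 w 0 < b ->
  dumont_word [:: a, b & w] = dumont_word w.
Proof.
move=> odd_a even_b ab w_gt0 w0b.
by rewrite !dumont_word_cons /dumont_at /= odd_a (negbTE even_b) ab w0b /=; lia.
Qed.

Lemma has123_cons2 a b w : a < b -> all (fun x => x < a) w ->
  has123 [:: a, b & w] = has123 w.
Proof.
move=> ab /allP w_lt_a.
have lt_a m : m < size w -> nth 0 w m < a by move=> ?; apply/w_lt_a/mem_nth.
apply/has123P/has123P => [[i [j [k [ij jk lt_k wij wjk]]]] | ].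
- case: i j k ij jk lt_k wij wjk => [|[|i]] [|[|j]] [|[|k]] //= ij jk lt_k wij wjk;
    try (have := lt_a k; lia); try (have := lt_a j; lia).
  by exists i, j, k.
- by case=> i [j [k [ij jk lt_k wij wjk]]]; exists i.+2, j.+2, k.+2.
Qed.

Section IotaPermutation.
Variables (N : nat) (w : seq nat).
Hypothesis w_perm : perm_eq w (iota 1 N).

Lemma size_iota_perm : size w = N.
Proof. by rewrite (perm_size w_perm) size_iota. Qed.

Lemma mem_iota_perm v : (v \in w) = (0 < v <= N).
Proof. by rewrite (perm_mem w_perm) mem_iota; apply/idP/idP; lia. Qed.

Lemma nth_iota_perm_bounds i : i < N -> 0 < nth 0 w i <= N.
Proof. by move=> lt_i; rewrite -mem_iota_perm mem_nth ?size_iota_perm. Qed.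

Lemma nth_iota_perm_le i : nth 0 w i <= N.
Proof.
case: (ltnP i N) => [/nth_iota_perm_bounds /andP[] // | le_Ni].
by rewrite nth_default ?size_iota_perm.
Qed.

Lemma nth_iota_perm_inj i j : i < N -> j < N -> nth 0 w i = nth 0 w j -> i = j.
Proof.
move=> lt_i lt_j eq_ij; apply/eqP.
rewrite -(nth_uniq 0 _ _ (_ : uniq w)) ?size_iota_perm //.
  by rewrite eq_ij.
by rewrite (perm_uniq w_perm) iota_uniq.
Qed.

Lemma index_iota_perm v : 0 < v <= N -> index v w < N /\ nth 0 w (index v w) = v.
Proof.
by rewrite -mem_iota_perm => w_v; rewrite -size_iota_perm index_mem nth_index.
Qed.

End IotaPermutation.

Lemma perm_cons2_iota M w :
  perm_eq [:: M.+1, M.+2 & w] (iota 1 M.+2) = perm_eq w (iota 1 M).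
Proof.
rewrite -[[:: M.+1, M.+2 & w]]/([:: M.+1; M.+2] ++ w).
rewrite -[in iota 1 _]addn2 iotaD add1n.
by rewrite perm_sym perm_catC perm_sym perm_cat2l.
Qed.

Lemma dumont123_cons2 M w : ~~ odd M -> 0 < M -> perm_eq w (iota 1 M) ->
  dumont123 [:: M.+1, M.+2 & w] = dumont123 w.
Proof.
move=> M_even M_gt0 w_perm; have w_size := size_iota_perm w_perm.
rewrite /dumont123 has123_cons2 //; last first.
  by apply/allP => x; rewrite (mem_iota_perm w_perm); lia.
rewrite dumont_word_cons2 //= ?M_even ?w_size //.
by have := nth_iota_perm_le w_perm 0; lia.
Qed.

Section TopPair.
Variables (M : nat) (w : seq nat).
Hypotheses (M_even : ~~ odd M) (M_ge6 : 6 <= M).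
Hypotheses (w_perm : perm_eq w (iota 1 M.+2)) (w_dumont : dumont_word w).
Hypothesis w_avoid : ~~ has123 w.

Let w_size : size w = M.+2 := size_iota_perm w_perm.
Let w_le := nth_iota_perm_le w_perm.
Let w_inj := nth_iota_perm_inj w_perm.

Lemma no123 i j k : i < j -> j < k -> k < M.+2 ->
  nth 0 w i < nth 0 w j -> nth 0 w j < nth 0 w k -> False.
Proof.
move=> ij jk lt_k wij wjk; move/has123P: w_avoid; apply.
by exists i, j, k; rewrite w_size.
Qed.

Lemma odd_ascent i : i < M.+1 -> odd (nth 0 w i) -> nth 0 w i < nth 0 w i.+1.
Proof.
move=> lt_i odd_wi; move/dumont_wordP: w_dumont => /(_ i).
by rewrite /dumont_at odd_wi w_size /= => /(_ (ltnW lt_i)) /orP[/eqP|] //; lia.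
Qed.

Lemma top_pair_of_not_last :
  index M.+1 w < M.+1 -> w = [:: M.+1, M.+2 & drop 2 w].
Proof.
have [_] := index_iota_perm w_perm (v := M.+1) (leqnSn _).
move: (index M.+1 w) => p w_p lt_p.
have w_p1 : nth 0 w p.+1 = M.+2.
  have := odd_ascent lt_p; rewrite w_p /= M_even => /(_ isT).
  by have := w_le p.+1; lia.
have p0 : p = 0.
  case: p lt_p w_p w_p1 => // p lt_p w_p w_p1.
  have w0_new j : j.+1 < M.+2 -> nth 0 w 0 <> nth 0 w j.+1 by move=> ? /w_inj; lia.
  have := w0_new p; have := w0_new p.+1; have := w_le 0.
  by rewrite w_p w_p1 => *; exfalso; apply: (@no123 0 p.+1 p.+2); lia.
move: w_size w_p w_p1; rewrite p0.
by case: (w) => [|x [|y w']] //= _ -> ->; rewrite drop0.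
Qed.

Lemma top_pred_not_last : index M.+1 w < M.+1.
Proof.
have [lt_p w_p] := index_iota_perm w_perm (v := M.+1) (leqnSn _).
rewrite ltn_neqAle -ltnS lt_p andbT; apply/eqP => last_p.
have [lt_top w_top] := index_iota_perm w_perm (v := M.+2) (leqnn _).
have slot v : odd v -> 0 < v < M.+1 ->
    index v w = M \/ (index v w).+1 = index M.+2 w.
  move=> odd_v v_bounds.
  have [] : index v w < M.+2 /\ nth 0 w (index v w) = v.
    by apply: (index_iota_perm w_perm); lia.
  move: (index v w) => q lt_q w_q.
  have q_ne_p : q <> M.+1.
    by move=> q_last; move: w_q; rewrite q_last -last_p w_p; lia.
  have [-> | q_ne_M] := eqVneq q M; [by left | right].
  have asc := odd_ascent (_ : q < M.+1); rewrite w_q odd_v in asc.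
  have := w_le q.+1.
  case: (ltngtP (nth 0 w q.+1) M.+2) => // [lt_top' _ | eq_top _].
  - have w_q1_ne : nth 0 w q.+1 <> M.+1 by rewrite -w_p => /w_inj; lia.
    by exfalso; apply: (@no123 q q.+1 (index M.+1 w)); rewrite ?w_q ?w_p; lia.
  - by apply: w_inj; rewrite ?w_top; lia.
have index_inj u v :
    0 < u <= M.+2 -> 0 < v <= M.+2 -> index u w = index v w -> u = v.
  move=> /(index_iota_perm w_perm)[_ w_u] /(index_iota_perm w_perm)[_ w_v] eq_uv.
  by rewrite -w_u -w_v eq_uv.
have := slot 1 isT; have := slot 3 isT; have := slot 5 isT.
have := index_inj 1 3; have := index_inj 1 5; have := index_inj 3 5.
lia.
Qed.

Lemma top_pair : w = [:: M.+1, M.+2 & drop 2 w].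
Proof. exact: top_pair_of_not_last top_pred_not_last. Qed.

End TopPair.

Lemma size_dumont123_words_step M : ~~ odd M -> 6 <= M ->
  size (dumont123_words M.+2) = size (dumont123_words M).
Proof.
move=> M_even M_ge6; rewrite /dumont123_words.
rewrite -[in RHS](size_map (fun w => [:: M.+1, M.+2 & w])).
apply/perm_size/uniq_perm.
- by rewrite filter_uniq ?permutations_uniq.
- by rewrite map_inj_uniq ?filter_uniq ?permutations_uniq // => u v [].
move=> w; rewrite mem_filter mem_permutations.
apply/andP/mapP => [[w_ok w_perm] | [w' + ->]].
- have w_top : w = [:: M.+1, M.+2 & drop 2 w].
    by case/andP: w_ok => w_dumont w_avoid; apply: top_pair.
  exists (drop 2 w) => //; rewrite mem_filter mem_permutations.
  rewrite w_top perm_cons2_iota in w_perm.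
  by rewrite -(dumont123_cons2 M_even) -?w_top ?w_ok ?w_perm //; lia.
- rewrite mem_filter mem_permutations => /andP[w'_ok w'_perm].
  by rewrite perm_cons2_iota dumont123_cons2 //; lia.
Qed.

Lemma size_dumont123_words6 : size (dumont123_words 6) = 4.
Proof. by vm_compute. Qed.

Lemma size_dumont123_words n : 3 <= n -> size (dumont123_words (2 * n)) = 4.
Proof.
elim: n => // n IH; case: (leqP 3 n) => [n_ge3 _ | n_lt3 n_ge2].
- rewrite mulnS add2n size_dumont123_words_step ?IH ?odd_mul //; lia.
- have -> : n = 2 by lia.
  exact: size_dumont123_words6.
Qed.

Lemma word_nth N (s : 'S_N) (i : 'I_N) : nth 0 (word s) i = (s i).+1.
Proof. by rewrite /word (nth_map i) ?size_enum_ord // nth_ord_enum. Qed.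

Lemma size_word N (s : 'S_N) : size (word s) = N.
Proof. by rewrite /word size_map size_enum_ord. Qed.

Lemma word_inj N : injective (@word N).
Proof.
move=> s t st; apply/permP => i; apply/val_inj.
by have := congr1 (nth 0 ^~ i) st; rewrite /= !word_nth => -[].
Qed.

Lemma perm_word_iota N (s : 'S_N) : perm_eq (word s) (iota 1 N).
Proof.
have enum_s : perm_eq (map s (enum 'I_N)) (enum 'I_N).
  apply: uniq_perm => [|| i]; rewrite ?enum_uniq //.
  - by rewrite map_inj_uniq ?enum_uniq //; apply: perm_inj.
  - by rewrite mem_enum -[i](permKV s) map_f ?mem_enum.
have -> : iota 1 N = map (fun i : 'I_N => (val i).+1) (enum 'I_N).
  by rewrite -add1n iotaDl -val_enum_ord -map_comp.
by have := perm_map (fun i : 'I_N => (val i).+1) enum_s; rewrite -map_comp.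
Qed.

Lemma map_word_enum N : map (@word N) (enum 'S_N) =i permutations (iota 1 N).
Proof.
apply: (uniq_min_size _ _ _).2.
- by rewrite map_inj_uniq ?enum_uniq //; apply: word_inj.
- by move=> w /mapP[s _ ->]; rewrite mem_permutations perm_word_iota.
- by rewrite size_map -cardT card_Sn size_permutations ?iota_uniq ?size_iota.
Qed.

Lemma card_word_pred N (P : pred (seq nat)) :
  #|[set s : 'S_N | P (word s)]| = count P (permutations (iota 1 N)).
Proof.
rewrite -size_filter cardE -(size_map (@word N)); apply/perm_size/uniq_perm.
- by rewrite map_inj_uniq ?enum_uniq //; apply: word_inj.
- by rewrite filter_uniq ?permutations_uniq.
move=> w; rewrite mem_filter -map_word_enum.
apply/mapP/andP => [[s + ->] | [Pw /mapP[s _ w_s]]].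
- by rewrite mem_enum inE => Ps; rewrite Ps map_f ?mem_enum.
- by exists s; rewrite // mem_enum inE -w_s.
Qed.

Lemma dumont1_word N (s : 'S_N) : dumont1 s = dumont_word (word s).
Proof.
apply/forallP/dumont_wordP => [ds i | ds i].
- by rewrite /dumont_at !size_word => lt_i; apply: (ds (Ordinal lt_i)).
- by have := ds i; rewrite /dumont_at size_word => /(_ (ltn_ord i)).
Qed.

Lemma contains123P N (s : 'S_N) :
  reflect (exists i j k : 'I_N, [/\ i < j, j < k, s i < s j & s j < s k])
          (contains s pat123).
Proof.
apply: (iffP existsP) => [[f /andP[/forallP f_incr /forallP f_iso]] | ].
- have f_lt (a b : 'I_3) : a < b -> f a < f b.
    by move/implyP: (forallP (f_incr a) b).
  have sf_lt (a b : 'I_3) : a < b -> s (f a) < s (f b).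
    by move/forallP: (f_iso a) => /(_ b); rewrite /pat123 !perm1 => /eqP ->.
  pose o0 := @Ordinal 3 0 isT; pose o1 := @Ordinal 3 1 isT.
  pose o2 := @Ordinal 3 2 isT.
  by exists (f o0), (f o1), (f o2); split; [apply: f_lt | apply: f_lt | apply: sf_lt..].
- case=> i [j [k [ij jk sij sjk]]].
  exists [ffun x : 'I_3 => nth i [:: i; j; k] x].
  apply/andP; split; apply/forallP => -[[|[|[|x]]] lt_x] //; apply/forallP;
    move=> -[[|[|[|y]]] lt_y] //; rewrite !ffunE /pat123 ?perm1 /=; lia.
Qed.

Lemma avoids123_word N (s : 'S_N) : avoids s pat123 = ~~ has123 (word s).
Proof.
congr negb; apply/contains123P/has123P => [[i [j [k [ij jk sij sjk]]]] | ].
  by exists i, j, k; rewrite size_word !word_nth ltn_ord ltnS ?ij ?jk ?sij ?sjk.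
case=> i [j [k [ij jk lt_k wij wjk]]]; rewrite size_word in lt_k.
have lt_j : j < N by lia.
have lt_i : i < N by lia.
move: wij wjk; rewrite -[i]/(val (Ordinal lt_i)) -[j]/(val (Ordinal lt_j)).
rewrite -[k]/(val (Ordinal lt_k)) !word_nth !ltnS => sij sjk.
by exists (Ordinal lt_i), (Ordinal lt_j), (Ordinal lt_k).
Qed.

Lemma card_D1_avoid123 n : #|D1_avoid123 n| = size (dumont123_words (2 * n)).
Proof.
rewrite /dumont123_words size_filter -card_word_pred; apply: eq_card => s.
by rewrite !inE dumont1_word avoids123_word.
Qed.

Theorem theorem2p5 (n : nat) : 3 <= n -> #|D1_avoid123 n| = 4.
Proof. by move=> n_ge3; rewrite card_D1_avoid123 size_dumont123_words. Qed.
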